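(* In the two-dimensional perturbed elephant random walk with stops, assume $\epsilon+r\neq1$, and let $C=\frac{r}{(\epsilon+r)\Gamma(1-\epsilon-r)}$. Then for all $t\ge1$, $\mathbb{E}[|\boldsymbol\sigma_t|^2]=C\frac{\Gamma(t-\epsilon-r)}{\Gamma(t)}+\frac{\epsilon}{\epsilon+r}$. If moreover $\gamma\in(-\tfrac12,1)$, $\gamma\neq\tfrac12$ and $2\gamma\neq1-\epsilon-r$, then for all $t\ge1$ $$\mathbb{E}[|\boldsymbol X_t|^2]=\frac{\epsilon}{(1-2\gamma)(\epsilon+r)}\,t+\frac{C}{1-\epsilon-r-2\gamma}\,\frac{\Gamma(t+1-\epsilon-r)}{\Gamma(t)}+D\,\frac{\Gamma(t+2\gamma)}{\Gamma(t)},$$ where $D=-\dfrac{1}{\Gamma(2\gamma)}\Big[\dfrac{\epsilon}{(\epsilon+r)(1-2\gamma)}+\dfrac{r}{(\epsilon+r)(1-\epsilon-r-2\gamma)}\Big]$ (with $1/\Gamma(0)=0$ when $\gamma=0$).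
   Context: Two-dimensional perturbed elephant random walk with stops: let $\mathbf i,\mathbf j$ be the standard basis of $\mathbb R^2$, $I$ the identity matrix and $A=\begin{bmatrix}0&-1\\1&0\end{bmatrix}$ (rotation by $\pi/2$). Fix $p,q,p',q',r\in(0,1)$ with $p+q+p'+q'+r=1$, $\epsilon\in(0,1)$, and $s_1,\dots,s_4\in(0,1)$ with $s_1+s_2+s_3+s_4=1$; set $\gamma=p-q$, $\gamma'=p'-q'$. Steps $\boldsymbol\sigma_t\in\{\mathbf i,\mathbf j,-\mathbf i,-\mathbf j,\mathbf 0\}$, $\boldsymbol X_0=\mathbf 0$, $\boldsymbol X_t=\boldsymbol\sigma_1+\dots+\boldsymbol\sigma_t$. The first step equals $\mathbf i,\mathbf j,-\mathbf i,-\mathbf j$ with probabilities $s_1,s_2,s_3,s_4$. For $t\ge1$, conditionally on $\boldsymbol\sigma_1,\dots,\boldsymbol\sigma_t$, choose $k\in\{1,\dots,t\}$ uniformly at random. If $|\boldsymbol\sigma_k|=1$, then $\boldsymbol\sigma_{t+1}$ equals $\boldsymbol\sigma_k$, $-\boldsymbol\sigma_k$, $A\boldsymbol\sigma_k$, $A^{-1}\boldsymbol\sigma_k$, $\mathbf 0$ with probabilities $p,q,p',q',r$ respectively. If $\boldsymbol\sigma_k=\mathbf 0$, then $\boldsymbol\sigma_{t+1}$ equals each of $\mathbf i,\mathbf j,-\mathbf i,-\mathbf j$ with probability $\epsilon/4$ and $\mathbf 0$ with probability $1-\epsilon$. *)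

From Stdlib Require Import Reals ZArith List ClassicalEpsilon.
Import ListNotations.
Open Scope R_scope.

(** Euler's Gamma function, defined by Gauss's limit formula
    Gamma x = lim_n n! n^x / (x (x+1) ... (x+n)),
    valid for every x that is not a nonpositive integer.
    (The value at nonpositive integers is irrelevant/unspecified.) *)
Definition gauss_seq (x : R) (n : nat) : R :=
  INR (fact n) * Rpower (INR n) x / prod_f_R0 (fun k => x + INR k) n.

Definition Gamma (x : R) : R :=
  epsilon (inhabits 0) (fun l => Un_cv (gauss_seq x) l).

Definition vec : Type := (Z * Z)%type.
Definition veq (u v : vec) : bool :=
  (Z.eqb (fst u) (fst v) && Z.eqb (snd u) (snd v))%bool.
Definition vzero : vec := (0%Z, 0%Z).
Definition vopp (u : vec) : vec := (Z.opp (fst u), Z.opp (snd u)).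
(* A = [[0,-1],[1,0]] : A(x,y) = (-y,x);  A^{-1}(x,y) = (y,-x) *)
Definition rotA (u : vec) : vec := (Z.opp (snd u), fst u).
Definition rotAinv (u : vec) : vec := (snd u, Z.opp (fst u)).
Definition vadd (u v : vec) : vec := (fst u + fst v, snd u + snd v)%Z.
Definition sqnorm (u : vec) : R := IZR (fst u * fst u + snd u * snd u).

Definition steps : list vec :=
  [(1,0); (0,1); (-1,0); (0,-1); (0,0)]%Z.

Definition first_law (s1 s2 s3 s4 : R) (v : vec) : R :=
  if veq v (1%Z, 0%Z) then s1
  else if veq v (0%Z, 1%Z) then s2
  else if veq v ((-1)%Z, 0%Z) then s3
  else if veq v (0%Z, (-1)%Z) then s4
  else 0.

(** Probability that sigma_{t+1} = v given that the remembered step is u. *)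
Definition kernel (p q p' q' r eps : R) (u v : vec) : R :=
  if veq u vzero then (if veq v vzero then 1 - eps else eps / 4)
  else if veq v u then p
  else if veq v (vopp u) then q
  else if veq v (rotA u) then p'
  else if veq v (rotAinv u) then q'
  else if veq v vzero then r
  else 0.

(** Probability of a history, given in REVERSE chronological order
    [sigma_t; sigma_{t-1}; ...; sigma_1].  Given sigma_1..sigma_t, the
    step sigma_{t+1} is drawn by choosing k uniformly in {1..t} and
    applying [kernel] to sigma_k. *)
Fixpoint rprob (p q p' q' r eps s1 s2 s3 s4 : R) (rh : list vec) : R :=
  match rh with
  | nil => 1
  | v :: nil => first_law s1 s2 s3 s4 v
  | v :: ((_ :: _) as rest) =>
      rprob p q p' q' r eps s1 s2 s3 s4 rest *
      (/ INR (length rest) *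
       fold_right (fun u acc => kernel p q p' q' r eps u v + acc) 0 rest)
  end.

Fixpoint rpaths (n : nat) : list (list vec) :=
  match n with
  | O => [nil]
  | S n => flat_map (fun h => map (fun v => v :: h) steps) (rpaths n)
  end.

Definition expect (p q p' q' r eps s1 s2 s3 s4 : R) (t : nat)
    (f : list vec -> R) : R :=
  fold_right
    (fun h acc => rprob p q p' q' r eps s1 s2 s3 s4 h * f h + acc)
    0 (rpaths t).

Definition erw_step (rh : list vec) : vec := hd vzero rh.
Definition erw_pos (rh : list vec) : vec := fold_right vadd vzero rh.

From Stdlib Require Import Reals Lra Lia List ClassicalEpsilon.
From Coquelicot Require Import Coquelicot.
Import ListNotations.
Open Scope R_scope.

(* Averaging the kernel over the remembered step gives exact one-step moment
   identities: with S_t = |sigma_1|^2 + ... + |sigma_t|^2 (the number of moves),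
   E|sigma_(t+1)|^2 = eps + (1 - r - eps) E S_t / t and
   E|X_(t+1)|^2 = (1 + 2 gamma / t) E|X_t|^2 + E|sigma_(t+1)|^2,
   the rotated moves contributing nothing because A^-1 X is orthogonal to X.
   These linear recursions are solved exactly by ratios (b)_n / n! of rising
   factorials, which Gauss's product formula identifies with
   Gamma (b + n) / (Gamma b * Gamma (n + 1)). *)

Fixpoint gauss_prod (x : R) (n : nat) : R :=
  match n with O => 1 | S m => gauss_prod x m * (1 + x / INR (S m)) end.

Fixpoint rising (b : R) (m : nat) : R :=
  match m with O => 1 | S k => rising b k * (b + INR k) end.

Lemma gauss_prod_pos x n : -1 < x -> 0 < gauss_prod x n.
Proof.
  intros Hx; induction n as [|n IH]; cbn [gauss_prod]; [lra|].
  apply Rmult_lt_0_compat; [exact IH|].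
  assert (1 <= INR (S n)) by (apply (le_INR 1); lia).
  replace (1 + x / INR (S n)) with ((INR (S n) + x) / INR (S n)) by (field; lra).
  apply Rdiv_lt_0_compat; lra.
Qed.

Lemma prod_f_R0_gauss_prod x n :
  prod_f_R0 (fun k => x + INR k) n = x * INR (Factorial.fact n) * gauss_prod x n.
Proof.
  induction n as [|n IH]; [simpl; lra|].
  cbn [prod_f_R0 gauss_prod]. rewrite IH.
  change (Factorial.fact (S n)) with (S n * Factorial.fact n)%nat. rewrite mult_INR.
  assert (INR (S n) <> 0) by (apply not_0_INR; lia).
  field. auto.
Qed.

Lemma gauss_seq_eq x n : -1 < x -> x <> 0 ->
  gauss_seq x n = Rpower (INR n) x / (x * gauss_prod x n).
Proof.
  intros Hx Hx0. unfold gauss_seq. rewrite prod_f_R0_gauss_prod.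
  pose proof (gauss_prod_pos x n Hx). pose proof (INR_fact_neq_0 n).
  field. repeat split; lra || auto.
Qed.

Lemma gauss_prod_shift x n :
  (x + 1) * gauss_prod (x + 1) n = (x + INR n + 1) * gauss_prod x n.
Proof.
  induction n as [|n IH]; [simpl; lra|].
  cbn [gauss_prod]. assert (INR (S n) <> 0) by (apply not_0_INR; lia).
  rewrite S_INR in *.
  transitivity ((x + 1) * gauss_prod (x + 1) n * (1 + (x + 1) / (INR n + 1))); [ring|].
  rewrite IH. field. auto.
Qed.

Lemma gauss_seq_shift x n : -1 < x -> x <> 0 -> (1 <= n)%nat ->
  gauss_seq (x + 1) n = gauss_seq x n * (x * (INR n / (INR n + (x + 1)))).
Proof.
  intros Hx Hx0 Hn. rewrite !gauss_seq_eq by lra.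
  assert (1 <= INR n) by (apply (le_INR 1); lia).
  rewrite Rpower_plus, Rpower_1 by lra.
  assert (E : gauss_prod (x + 1) n = (x + INR n + 1) * gauss_prod x n / (x + 1)).
  { rewrite <- gauss_prod_shift. field. lra. }
  rewrite E. pose proof (gauss_prod_pos x n Hx).
  field. repeat split; lra.
Qed.

Lemma is_lim_seq_INR_ratio b : 0 < b -> is_lim_seq (fun n => INR n / (INR n + b)) 1.
Proof.
  intros Hb.
  apply is_lim_seq_ext_loc with (u := fun n => 1 / (1 + b * / INR n)).
  - exists 1%nat. intros n Hn.
    assert (1 <= INR n) by (apply (le_INR 1); lia).
    field. split; lra.
  - replace (Finite 1) with (Finite (1 / (1 + b * 0))) by (f_equal; field).
    apply is_lim_seq_div'; [apply is_lim_seq_const| |lra].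
    apply is_lim_seq_plus'; [apply is_lim_seq_const|].
    apply is_lim_seq_mult'; [apply is_lim_seq_const|].
    replace (Finite 0) with (Rbar_inv p_infty) by reflexivity.
    apply is_lim_seq_inv; [apply is_lim_seq_INR| discriminate].
Qed.

(* Where Gauss's limit exists and is nonzero, [Gamma] is the true Gamma function. *)
Definition gauss_cv (x : R) : Prop :=
  -1 < x /\ exists l, l <> 0 /\ Un_cv (gauss_seq x) l.

Lemma Gamma_lim x l : Un_cv (gauss_seq x) l -> Gamma x = l.
Proof.
  intros H. unfold Gamma.
  apply UL_sequence with (gauss_seq x); [|exact H].
  exact (epsilon_spec (inhabits 0) (fun l => Un_cv (gauss_seq x) l) (ex_intro _ l H)).
Qed.

Lemma Gamma_neq0 x : gauss_cv x -> Gamma x <> 0.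
Proof. intros [_ [l [Hl Hc]]]. rewrite (Gamma_lim _ _ Hc). exact Hl. Qed.

Lemma gauss_cv_succ x : gauss_cv x -> x <> 0 ->
  gauss_cv (x + 1) /\ Gamma (x + 1) = x * Gamma x.
Proof.
  intros [Hx [l [Hl Hc]]] Hx0.
  assert (Hc1 : Un_cv (gauss_seq (x + 1)) (l * (x * 1))).
  { apply is_lim_seq_Reals.
    apply is_lim_seq_ext_loc
      with (u := fun n => gauss_seq x n * (x * (INR n / (INR n + (x + 1))))).
    - exists 1%nat. intros n Hn. symmetry. apply gauss_seq_shift; auto.
    - apply is_lim_seq_mult'; [apply is_lim_seq_Reals; exact Hc|].
      apply is_lim_seq_mult'; [apply is_lim_seq_const|].
      apply is_lim_seq_INR_ratio. lra. }
  split.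
  - split; [lra|]. exists (l * (x * 1)). split; [|exact Hc1].
    rewrite Rmult_1_r. now apply Rmult_integral_contrapositive_currified.
  - rewrite (Gamma_lim _ _ Hc1), (Gamma_lim _ _ Hc). ring.
Qed.

Lemma gauss_cv_pred x : -1 < x -> x <> 0 -> gauss_cv (x + 1) -> gauss_cv x.
Proof.
  intros Hx Hx0 [_ [l [Hl Hc]]].
  split; [lra|]. exists (l / (x * 1)). split.
  - rewrite Rmult_1_r. unfold Rdiv.
    now apply Rmult_integral_contrapositive_currified, Rinv_neq_0_compat.
  - apply is_lim_seq_Reals.
    apply is_lim_seq_ext_loc
      with (u := fun n => gauss_seq (x + 1) n / (x * (INR n / (INR n + (x + 1))))).
    + exists 1%nat. intros n Hn. rewrite gauss_seq_shift by auto.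
      assert (1 <= INR n) by (apply (le_INR 1); lia).
      field. repeat split; lra.
    + apply is_lim_seq_div'; [apply is_lim_seq_Reals; exact Hc| |lra].
      apply is_lim_seq_mult'; [apply is_lim_seq_const|].
      apply is_lim_seq_INR_ratio. lra.
Qed.

Lemma ln_le_sub1 z : 0 < z -> ln z <= z - 1.
Proof. intros Hz. pose proof (exp_ineq1_le (ln z)). rewrite exp_ln in H by lra. lra. Qed.

Lemma ln_ge_1_sub_inv z : 0 < z -> 1 - / z <= ln z.
Proof.
  intros Hz. pose proof (ln_le_sub1 (/ z) (Rinv_0_lt_compat z Hz)).
  rewrite ln_Rinv in H by exact Hz. lra.
Qed.

Lemma exp_le_compat a b : a <= b -> exp a <= exp b.
Proof. intros [H|H]; [left; apply exp_increasing; exact H|right; rewrite H; reflexivity]. Qed.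

Lemma Rpower_succ_ge m x : 0 < m -> 0 <= x ->
  Rpower m x * (1 + x / (m + 1)) <= Rpower (m + 1) x.
Proof.
  intros Hm Hx.
  assert (E : Rpower (m + 1) x = Rpower m x * exp (x * ln ((m + 1) / m))).
  { change (exp (x * ln ((m + 1) / m))) with (Rpower ((m + 1) / m) x).
    rewrite Rpower_mult_distr by (try apply Rdiv_lt_0_compat; lra).
    f_equal. field. lra. }
  rewrite E. apply Rmult_le_compat_l; [left; apply exp_pos|].
  eapply Rle_trans; [|apply exp_ineq1_le]. apply Rplus_le_compat_l.
  pose proof (ln_ge_1_sub_inv ((m + 1) / m) ltac:(apply Rdiv_lt_0_compat; lra)).
  replace (1 - / ((m + 1) / m)) with (1 / (m + 1)) in H by (field; lra).
  replace (x / (m + 1)) with (x * (1 / (m + 1))) by (field; lra).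
  apply Rmult_le_compat_l; lra.
Qed.

Lemma Rpower_ratio_le k x : 1 <= k -> 0 < x <= 1 ->
  Rpower ((k + 2) / (k + 1)) x <= 1 + x / k.
Proof.
  intros Hk Hx.
  assert (0 < x / k) by (apply Rdiv_lt_0_compat; lra).
  rewrite <- (exp_ln (1 + x / k)) by lra.
  apply exp_le_compat.
  pose proof (ln_le_sub1 ((k + 2) / (k + 1)) ltac:(apply Rdiv_lt_0_compat; lra)) as Hup.
  pose proof (ln_ge_1_sub_inv (1 + x / k) ltac:(lra)) as Hlo.
  replace ((k + 2) / (k + 1) - 1) with (1 / (k + 1)) in Hup by (field; lra).
  replace (1 - / (1 + x / k)) with (x / (k + x)) in Hlo by (field; lra).
  assert (x / (k + 1) <= x / (k + x)).
  { apply Rmult_le_compat_l; [lra|]. apply Rinv_le_contravar; lra. }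
  assert (Hmul : x * ln ((k + 2) / (k + 1)) <= x * (1 / (k + 1)))
    by (apply Rmult_le_compat_l; lra).
  replace (x * (1 / (k + 1))) with (x / (k + 1)) in Hmul by (field; lra).
  lra.
Qed.

Lemma gauss_prod_ge x n : 0 < x <= 1 ->
  Rpower ((INR n + 2) / 2) x <= gauss_prod x n.
Proof.
  intros Hx. induction n as [|n IH].
  - simpl. replace ((0 + 2) / 2) with 1 by field.
    unfold Rpower. rewrite ln_1, Rmult_0_r, exp_0. lra.
  - pose proof (pos_INR n). cbn [gauss_prod]. rewrite S_INR.
    replace ((INR n + 1 + 2) / 2)
      with ((INR n + 2) / 2 * ((INR n + 1 + 2) / (INR n + 1 + 1))) by (field; lra).
    rewrite <- Rpower_mult_distr by (apply Rdiv_lt_0_compat; lra).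
    apply Rmult_le_compat; [left; apply exp_pos | left; apply exp_pos | exact IH |].
    apply Rpower_ratio_le; lra.
Qed.

Lemma gauss_seq_le_succ x n : 0 < x <= 1 -> (1 <= n)%nat ->
  gauss_seq x n <= gauss_seq x (S n).
Proof.
  intros Hx Hn. rewrite !gauss_seq_eq by lra. cbn [gauss_prod].
  assert (Hn1 : 1 <= INR n) by (apply (le_INR 1); lia).
  pose proof (gauss_prod_pos x n ltac:(lra)) as HQ.
  rewrite S_INR.
  assert (0 < x / (INR n + 1)) by (apply Rdiv_lt_0_compat; lra).
  apply Rle_trans with (Rpower (INR n) x * (1 + x / (INR n + 1))
                          / (x * (gauss_prod x n * (1 + x / (INR n + 1))))).
  - right. field. repeat split; lra.
  - apply Rmult_le_compat_r; [|apply Rpower_succ_ge; lra].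
    left. apply Rinv_0_lt_compat. apply Rmult_lt_0_compat; [lra|].
    apply Rmult_lt_0_compat; lra.
Qed.

Lemma gauss_seq_le x n : 0 < x <= 1 -> (1 <= n)%nat -> gauss_seq x n <= Rpower 2 x / x.
Proof.
  intros Hx Hn. rewrite gauss_seq_eq by lra.
  assert (Hn1 : 1 <= INR n) by (apply (le_INR 1); lia).
  pose proof (gauss_prod_ge x n Hx) as HQ.
  assert (Hp : 0 < Rpower ((INR n + 2) / 2) x) by apply exp_pos.
  apply Rle_trans with (Rpower (INR n) x / (x * Rpower ((INR n + 2) / 2) x)).
  - apply Rmult_le_compat_l; [left; apply exp_pos|].
    apply Rinv_le_contravar; [apply Rmult_lt_0_compat; lra|].
    apply Rmult_le_compat_l; lra.
  - replace (Rpower (INR n) x)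
      with (Rpower ((INR n + 2) / 2) x * Rpower (2 * INR n / (INR n + 2)) x).
    2:{ rewrite Rpower_mult_distr by (apply Rdiv_lt_0_compat; lra). f_equal. field. lra. }
    replace (Rpower ((INR n + 2) / 2) x * Rpower (2 * INR n / (INR n + 2)) x
               / (x * Rpower ((INR n + 2) / 2) x))
      with (Rpower (2 * INR n / (INR n + 2)) x / x) by (field; lra).
    apply Rmult_le_compat_r; [left; apply Rinv_0_lt_compat; lra|].
    apply Rle_Rpower_l; [lra|]. split; [apply Rdiv_lt_0_compat; lra|].
    apply Rle_div_l; lra.
Qed.

Lemma gauss_cv_unit x : 0 < x <= 1 -> gauss_cv x.
Proof.
  intros Hx. split; [lra|].
  set (L := fun n => gauss_seq x (S n)).
  assert (Hg : Un_growing L) by (intro n; apply gauss_seq_le_succ; [lra|lia]).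
  assert (Hb : has_ub L).
  { exists (Rpower 2 x / x). intros y [n ->]. apply gauss_seq_le; [lra|lia]. }
  destruct (growing_cv L Hg Hb) as [l Hl].
  exists l. split.
  - pose proof (growing_ineq L l Hg Hl 0%nat). unfold L in H.
    rewrite gauss_seq_eq in H by lra.
    assert (0 < Rpower (INR 1) x / (x * gauss_prod x 1)).
    { apply Rdiv_lt_0_compat; [apply exp_pos|].
      apply Rmult_lt_0_compat; [lra|]. apply gauss_prod_pos; lra. }
    lra.
  - apply is_lim_seq_Reals, is_lim_seq_incr_1, is_lim_seq_Reals. exact Hl.
Qed.

Lemma gauss_cv_range b : -1 < b < 2 -> b <> 0 -> gauss_cv b.
Proof.
  intros Hb Hb0.
  destruct (Rlt_le_dec b 0) as [Hn|Hn].
  - apply gauss_cv_pred; [lra|exact Hb0|]. apply gauss_cv_unit. lra.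
  - destruct (Rle_lt_dec b 1) as [H1|H1]; [apply gauss_cv_unit; lra|].
    replace b with ((b - 1) + 1) by ring. apply gauss_cv_succ; [apply gauss_cv_unit|]; lra.
Qed.

Lemma Gamma_add_nat b m : gauss_cv b -> b <> 0 -> Gamma (b + INR m) = Gamma b * rising b m.
Proof.
  intros Hb Hb0. enough (gauss_cv (b + INR m) /\ Gamma (b + INR m) = Gamma b * rising b m)
    by tauto.
  induction m as [|m [IH1 IH2]].
  - simpl. rewrite Rplus_0_r. split; [exact Hb|ring].
  - rewrite S_INR. replace (b + (INR m + 1)) with ((b + INR m) + 1) by ring.
    assert (b + INR m <> 0).
    { destruct Hb as [Hb _]. destruct m; [simpl; rewrite Rplus_0_r; exact Hb0|].
      pose proof (pos_INR m). rewrite S_INR. lra. }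
    destruct (gauss_cv_succ _ IH1 H) as [A B]. split; [exact A|].
    rewrite B, IH2. cbn [rising]. ring.
Qed.

Lemma Gamma_1 : Gamma 1 = 1.
Proof.
  apply Gamma_lim, is_lim_seq_Reals.
  apply is_lim_seq_ext_loc with (u := fun n => INR n / (INR n + 1));
    [|apply is_lim_seq_INR_ratio; lra].
  exists 1%nat. intros n Hn. rewrite gauss_seq_eq by lra.
  assert (Q : gauss_prod 1 n = INR n + 1).
  { clear Hn. induction n as [|n IH]; cbn [gauss_prod]; [simpl; ring|].
    rewrite IH, S_INR. pose proof (pos_INR n). field. lra. }
  rewrite Q, Rpower_1 by (apply (lt_INR 0); lia).
  pose proof (pos_INR n). field. lra.
Qed.

Lemma Gamma_nat n : Gamma (INR (S n)) = rising 1 n.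
Proof.
  rewrite S_INR, Rplus_comm, Gamma_add_nat, Gamma_1; [ring | apply gauss_cv_unit; lra | lra].
Qed.

Lemma rising_1_pos n : 0 < rising 1 n.
Proof. induction n; cbn [rising]; [lra|]. pose proof (pos_INR n). nra. Qed.

Lemma rising_0_succ n : rising 0 (S n) = 0.
Proof. induction n; cbn [rising] in *; [simpl; ring|]. rewrite IHn. ring. Qed.

Definition sumL {A : Type} (l : list A) (F : A -> R) : R :=
  fold_right (fun x acc => F x + acc) 0 l.

Lemma sumL_app {A} (l1 l2 : list A) F : sumL (l1 ++ l2) F = sumL l1 F + sumL l2 F.
Proof. induction l1 as [|a l1 IH]; simpl; [ring|]. unfold sumL in *. simpl. rewrite IH. ring. Qed.

Lemma sumL_flat_map {A B} (g : A -> list B) l F :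
  sumL (flat_map g l) F = sumL l (fun x => sumL (g x) F).
Proof. induction l as [|a l IH]; simpl; [reflexivity|]. rewrite sumL_app, IH. reflexivity. Qed.

Lemma sumL_map {A B} (f : A -> B) l F : sumL (map f l) F = sumL l (fun x => F (f x)).
Proof.
  induction l as [|a l IH]; [reflexivity|]. unfold sumL in *; simpl; rewrite IH; reflexivity.
Qed.

Lemma sumL_ext {A} (l : list A) F G :
  (forall x, In x l -> F x = G x) -> sumL l F = sumL l G.
Proof.
  induction l as [|a l IH]; intros H; [reflexivity|].
  change (F a + sumL l F = G a + sumL l G).
  rewrite H, IH; [reflexivity| |left; reflexivity].
  intros x Hx. apply H. right. exact Hx.
Qed.

Lemma sumL_plus {A} (l : list A) F G : sumL l (fun x => F x + G x) = sumL l F + sumL l G.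
Proof. induction l as [|a l IH]; unfold sumL in *; simpl; [ring|]. rewrite IH. ring. Qed.

Lemma sumL_scal {A} (l : list A) c F : sumL l (fun x => c * F x) = c * sumL l F.
Proof. induction l as [|a l IH]; unfold sumL in *; simpl; [ring|]. rewrite IH. ring. Qed.

Lemma sumL_const {A} (l : list A) c : sumL l (fun _ => c) = INR (length l) * c.
Proof.
  induction l as [|a l IH]; [simpl; ring|].
  change (c + sumL l (fun _ => c) = INR (S (length l)) * c). rewrite IH, S_INR. ring.
Qed.

Lemma sumL_comm {A B} (l1 : list A) (l2 : list B) F :
  sumL l1 (fun x => sumL l2 (fun y => F x y)) = sumL l2 (fun y => sumL l1 (fun x => F x y)).
Proof.
  induction l1 as [|a l1 IH].
  - change (0 = sumL l2 (fun _ => 0)). rewrite sumL_const. ring.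
  - change (sumL l2 (fun y => F a y) + sumL l1 (fun x => sumL l2 (fun y => F x y))
            = sumL l2 (fun y => F a y + sumL l1 (fun x => F x y))).
    rewrite IH, sumL_plus. reflexivity.
Qed.

Definition dot (x v : vec) : R := IZR (fst x) * IZR (fst v) + IZR (snd x) * IZR (snd v).

Lemma dot_self x : dot x x = sqnorm x.
Proof. unfold sqnorm, dot. rewrite plus_IZR, !mult_IZR. ring. Qed.

Lemma dot_rotAinv x : dot (rotAinv x) x = 0.
Proof. unfold dot, rotAinv; simpl. rewrite opp_IZR. ring. Qed.

Lemma sqnorm_vadd v x : sqnorm (vadd v x) = sqnorm x + 2 * dot x v + sqnorm v.
Proof. unfold sqnorm, vadd, dot; simpl. rewrite !plus_IZR, !mult_IZR, !plus_IZR. ring. Qed.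

Lemma sumL_dot y h : sumL h (dot y) = dot y (erw_pos h).
Proof.
  induction h as [|a h IH]; [unfold sumL, erw_pos, dot, vzero; simpl; ring|].
  change (dot y a + sumL h (dot y) = dot y (vadd a (erw_pos h))).
  rewrite IH. unfold dot, vadd; simpl. rewrite !plus_IZR. ring.
Qed.

Lemma in_rpaths t h : In h (rpaths t) -> length h = t /\ (forall u, In u h -> In u steps).
Proof.
  revert h; induction t as [|t IH]; intros h H.
  - destruct H as [<-|[]]. split; [reflexivity|intros u []].
  - apply in_flat_map in H. destruct H as [h0 [H0 H1]].
    apply in_map_iff in H1. destruct H1 as [v [<- Hv]].
    destruct (IH h0 H0) as [L M]. split; [simpl; rewrite L; reflexivity|].
    intros u [<-|Hu]; auto.
Qed.

Section Walk.

Variables p q p' q' r eps s1 s2 s3 s4 : R.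
Hypothesis hsum : p + q + p' + q' + r = 1.
Hypothesis hssum : s1 + s2 + s3 + s4 = 1.

Local Notation kern := (kernel p q p' q' r eps).
Local Notation E := (expect p q p' q' r eps s1 s2 s3 s4).
Local Notation prob := (rprob p q p' q' r eps s1 s2 s3 s4).

Lemma expect_sumL t f : E t f = sumL (rpaths t) (fun h => prob h * f h).
Proof. reflexivity. Qed.

Lemma kernel_mass u : In u steps -> sumL steps (kern u) = 1.
Proof.
  intros Hu. destruct Hu as [<-|[<-|[<-|[<-|[<-|[]]]]]];
    unfold sumL, steps, kernel, veq; simpl; lra.
Qed.

Lemma kernel_sqnorm u : In u steps ->
  sumL steps (fun v => kern u v * sqnorm v) = eps + (1 - r - eps) * sqnorm u.
Proof.
  intros Hu. destruct Hu as [<-|[<-|[<-|[<-|[<-|[]]]]]];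
    unfold sumL, steps, kernel, veq, sqnorm; simpl; lra.
Qed.

Lemma kernel_dot u x : In u steps ->
  sumL steps (fun v => kern u v * dot x v) = (p - q) * dot x u + (p' - q') * dot (rotAinv x) u.
Proof.
  intros Hu. destruct Hu as [<-|[<-|[<-|[<-|[<-|[]]]]]];
    unfold sumL, steps, kernel, veq, dot; simpl; rewrite ?opp_IZR; field.
Qed.

Definition next_law (h : list vec) (v : vec) : R :=
  / INR (length h) * sumL h (fun u => kern u v).

Lemma sumL_next_law h F :
  sumL steps (fun v => next_law h v * F v) =
  / INR (length h) * sumL h (fun u => sumL steps (fun v => kern u v * F v)).
Proof.
  unfold next_law. rewrite <- sumL_comm, <- sumL_scal. apply sumL_ext. intros v _.
  rewrite Rmult_assoc, Rmult_comm with (r1 := sumL _ _). rewrite <- sumL_scal.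
  f_equal. apply sumL_ext. intros. ring.
Qed.

Lemma next_law_mass h : h <> nil -> (forall u, In u h -> In u steps) ->
  sumL steps (next_law h) = 1.
Proof.
  intros Hh Hsteps.
  transitivity (sumL steps (fun v => next_law h v * 1)); [apply sumL_ext; intros; ring|].
  rewrite sumL_next_law, (sumL_ext h _ (fun _ => 1)), sumL_const.
  - destruct h; [congruence|]. field. apply not_0_INR. simpl. lia.
  - intros u Hu. transitivity (sumL steps (kern u)); [|exact (kernel_mass u (Hsteps u Hu))].
    apply sumL_ext. intros; ring.
Qed.

Lemma expect_ext t f g : (forall h, In h (rpaths t) -> f h = g h) -> E t f = E t g.
Proof. intros H. rewrite !expect_sumL. apply sumL_ext. intros h Hh. rewrite H; auto. Qed.

Lemma expect_plus t f g : E t (fun h => f h + g h) = E t f + E t g.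
Proof.
  rewrite !expect_sumL, <- sumL_plus. apply sumL_ext. intros; ring.
Qed.

Lemma expect_scal t c f : E t (fun h => c * f h) = c * E t f.
Proof.
  rewrite !expect_sumL, <- sumL_scal. apply sumL_ext. intros; ring.
Qed.

Lemma expect_1 f :
  E 1 f = s1 * f [((1, 0)%Z : vec)] + s2 * f [((0, 1)%Z : vec)]
          + s3 * f [((-1, 0)%Z : vec)] + s4 * f [((0, -1)%Z : vec)].
Proof. unfold expect, rpaths, steps; simpl; unfold first_law, veq; simpl. ring. Qed.

Lemma expect_succ t f : (1 <= t)%nat ->
  E (S t) f = E t (fun h => sumL steps (fun v => next_law h v * f (v :: h))).
Proof.
  intros Ht. rewrite !expect_sumL. cbn [rpaths]. rewrite sumL_flat_map.
  apply sumL_ext. intros h Hh. rewrite sumL_map.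
  destruct (in_rpaths t h Hh) as [L _].
  destruct h as [|a h]; [simpl in L; lia|].
  rewrite <- sumL_scal. apply sumL_ext. intros v _.
  change (prob (v :: a :: h))
    with (prob (a :: h) * (/ INR (length (a :: h)) * sumL (a :: h) (fun u => kern u v))).
  unfold next_law. ring.
Qed.

Lemma expect_const1 t : (1 <= t)%nat -> E t (fun _ => 1) = 1.
Proof.
  induction t as [|[|t] IH]; intros Ht; [lia| |].
  - rewrite expect_1. lra.
  - rewrite expect_succ, <- (IH ltac:(lia)) at 1 by lia. apply expect_ext. intros h Hh.
    destruct (in_rpaths _ h Hh) as [L M].
    transitivity (sumL steps (next_law h)); [apply sumL_ext; intros; ring|].
    apply next_law_mass; [intros ->; discriminate|exact M].
Qed.

Lemma expect_step_sq_succ t : (1 <= t)%nat ->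
  E (S t) (fun h => sqnorm (erw_step h)) =
  eps + (1 - r - eps) / INR t * E t (fun h => sumL h sqnorm).
Proof.
  intros Ht.
  transitivity (E t (fun h => eps * 1 + (1 - r - eps) / INR t * sumL h sqnorm)).
  2:{ rewrite expect_plus, !expect_scal, expect_const1 by exact Ht. ring. }
  rewrite expect_succ by exact Ht. apply expect_ext. intros h Hh.
  destruct (in_rpaths _ h Hh) as [L M]. cbn [erw_step hd].
  rewrite sumL_next_law, (sumL_ext h _ (fun u => eps + (1 - r - eps) * sqnorm u))
    by (intros u Hu; apply kernel_sqnorm; auto).
  rewrite sumL_plus, sumL_const, sumL_scal, L.
  field. apply not_0_INR. lia.
Qed.

Lemma expect_sumsq_succ t : (1 <= t)%nat ->
  E (S t) (fun h => sumL h sqnorm) =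
  E (S t) (fun h => sqnorm (erw_step h)) + E t (fun h => sumL h sqnorm).
Proof.
  intros Ht. rewrite !expect_succ, <- expect_plus by exact Ht. apply expect_ext.
  intros h Hh. destruct (in_rpaths _ h Hh) as [L M].
  transitivity (sumL steps (fun v => next_law h v * sqnorm v + sumL h sqnorm * next_law h v)).
  - apply sumL_ext. intros v _.
    change (sumL (v :: h) sqnorm) with (sqnorm v + sumL h sqnorm). ring.
  - rewrite sumL_plus, sumL_scal, next_law_mass by (auto; intros ->; simpl in L; lia).
    cbn [erw_step hd]. ring.
Qed.

Lemma expect_pos_sq_succ t : (1 <= t)%nat ->
  E (S t) (fun h => sqnorm (erw_pos h)) =
  (1 + 2 * (p - q) / INR t) * E t (fun h => sqnorm (erw_pos h))
  + E (S t) (fun h => sqnorm (erw_step h)).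
Proof.
  intros Ht. rewrite !expect_succ, <- expect_scal, <- expect_plus by exact Ht.
  apply expect_ext. intros h Hh. destruct (in_rpaths _ h Hh) as [L M].
  set (X := erw_pos h).
  transitivity (sumL steps (fun v => sqnorm X * next_law h v
                  + (2 * (next_law h v * dot X v) + next_law h v * sqnorm v))).
  - apply sumL_ext. intros v _.
    change (erw_pos (v :: h)) with (vadd v X). rewrite sqnorm_vadd. ring.
  - rewrite !sumL_plus, !sumL_scal, next_law_mass by (auto; intros ->; simpl in L; lia).
    rewrite (sumL_next_law h (dot X)).
    rewrite (sumL_ext h _ (fun u => (p - q) * dot X u + (p' - q') * dot (rotAinv X) u))
      by (intros u Hu; apply kernel_dot; auto).
    rewrite sumL_plus, !sumL_scal, !sumL_dot, dot_self, dot_rotAinv, L.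
    cbn [erw_step hd]. fold X. field. apply not_0_INR. lia.
Qed.

Lemma expect_step_sumsq_closed n : eps + r <> 0 -> eps + r <> 1 ->
  E (S n) (fun h => sqnorm (erw_step h)) =
    r / (eps + r) * rising (1 - eps - r) n / rising 1 n + eps / (eps + r) /\
  E (S n) (fun h => sumL h sqnorm) =
    r / ((eps + r) * (1 - eps - r)) * rising (1 - eps - r) (S n) / rising 1 n
    + eps * (INR n + 1) / (eps + r).
Proof.
  intros Hc Hc1. induction n as [|n [IH1 IH2]].
  - rewrite !expect_1. unfold sqnorm, erw_step, sumL. simpl.
    replace s4 with (1 - s1 - s2 - s3) by lra.
    split; field; lra.
  - pose proof (rising_1_pos n). pose proof (pos_INR n).
    assert (Hstep : E (S (S n)) (fun h => sqnorm (erw_step h)) =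
      r / (eps + r) * rising (1 - eps - r) (S n) / rising 1 (S n) + eps / (eps + r)).
    { rewrite expect_step_sq_succ, IH2 by lia. cbn [rising]. rewrite !S_INR.
      field. repeat split; lra. }
    split; [exact Hstep|].
    rewrite expect_sumsq_succ, Hstep, IH2 by lia. cbn [rising]. rewrite !S_INR.
    field. repeat split; lra.
Qed.

Lemma expect_pos_sq_closed n : eps + r <> 0 -> eps + r <> 1 ->
  1 - 2 * (p - q) <> 0 -> 1 - eps - r - 2 * (p - q) <> 0 ->
  E (S n) (fun h => sqnorm (erw_pos h)) =
    eps / ((1 - 2 * (p - q)) * (eps + r)) * (INR n + 1)
    + r / ((eps + r) * (1 - eps - r - 2 * (p - q))) * rising (1 - eps - r) (S n) / rising 1 n
    - (eps / ((eps + r) * (1 - 2 * (p - q)))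
       + r / ((eps + r) * (1 - eps - r - 2 * (p - q))))
      * rising (2 * (p - q)) (S n) / rising 1 n.
Proof.
  intros Hc Hc1 H2g H3g. induction n as [|n IH].
  - rewrite expect_1. unfold sqnorm, erw_pos, vadd, vzero. simpl.
    replace s4 with (1 - s1 - s2 - s3) by lra. field. repeat split; lra.
  - pose proof (rising_1_pos n). pose proof (pos_INR n).
    rewrite expect_pos_sq_succ, IH by lia.
    destruct (expect_step_sumsq_closed (S n) Hc Hc1) as [-> _].
    cbn [rising]. rewrite !S_INR.
    field. repeat split; lra.
Qed.

End Walk.

Theorem mainTheorem11
  (p q p' q' r eps s1 s2 s3 s4 : R)
  (hp : 0 < p < 1) (hq : 0 < q < 1) (hp' : 0 < p' < 1) (hq' : 0 < q' < 1)
  (hr : 0 < r < 1) (hsum : p + q + p' + q' + r = 1)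
  (heps : 0 < eps < 1)
  (hs1 : 0 < s1 < 1) (hs2 : 0 < s2 < 1) (hs3 : 0 < s3 < 1) (hs4 : 0 < s4 < 1)
  (hssum : s1 + s2 + s3 + s4 = 1)
  (hne : eps + r <> 1) :
  let gamma := p - q in
  let C := r / ((eps + r) * Gamma (1 - eps - r)) in
  (forall t : nat, (1 <= t)%nat ->
     expect p q p' q' r eps s1 s2 s3 s4 t (fun h => sqnorm (erw_step h))
     = C * Gamma (INR t - eps - r) / Gamma (INR t) + eps / (eps + r)) /\
  (-(1/2) < gamma < 1 -> gamma <> 1/2 -> 2 * gamma <> 1 - eps - r ->
   let invG2g := if Req_EM_T gamma 0 then 0 else / Gamma (2 * gamma) in
   let D := - invG2g *
       (eps / ((eps + r) * (1 - 2 * gamma))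
        + r / ((eps + r) * (1 - eps - r - 2 * gamma))) in
   forall t : nat, (1 <= t)%nat ->
     expect p q p' q' r eps s1 s2 s3 s4 t (fun h => sqnorm (erw_pos h))
     = eps / ((1 - 2 * gamma) * (eps + r)) * INR t
       + C / (1 - eps - r - 2 * gamma)
           * (Gamma (INR t + 1 - eps - r) / Gamma (INR t))
       + D * (Gamma (INR t + 2 * gamma) / Gamma (INR t))).
Proof.
  intros gamma C.
  assert (Hc : eps + r <> 0) by lra.
  assert (Hb : gauss_cv (1 - eps - r)) by (apply gauss_cv_range; lra).
  pose proof (Gamma_neq0 _ Hb).
  split.
  - intros [|n] Ht; [lia|].
    destruct (expect_step_sumsq_closed p q p' q' r eps s1 s2 s3 s4 hsum hssum n Hc hne) as [-> _].
    replace (INR (S n) - eps - r) with (1 - eps - r + INR n) by (rewrite S_INR; ring).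
    rewrite Gamma_add_nat, Gamma_nat by (auto; lra).
    pose proof (rising_1_pos n). unfold C. field. repeat split; lra.
  - intros Hg1 Hg2 Hg3 invG2g D [|n] Ht; [lia|].
    rewrite (expect_pos_sq_closed p q p' q' r eps s1 s2 s3 s4 hsum hssum n Hc hne)
      by (fold gamma; lra).
    replace (INR (S n) + 1 - eps - r) with (1 - eps - r + INR (S n)) by ring.
    rewrite Gamma_add_nat, Gamma_nat by (auto; lra).
    pose proof (rising_1_pos n).
    unfold D, invG2g, C. fold gamma. destruct (Req_EM_T gamma 0) as [Hz|Hz].
    + rewrite Hz, Rmult_0_r, rising_0_succ, S_INR. field. repeat split; lra.
    + assert (Hg : gauss_cv (2 * gamma)) by (apply gauss_cv_range; lra).
      pose proof (Gamma_neq0 _ Hg).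
      replace (INR (S n) + 2 * gamma) with (2 * gamma + INR (S n)) by ring.
      rewrite Gamma_add_nat, S_INR by (auto; lra).
      field. repeat split; lra.
Qed.
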